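(* (i) Let $B_1,\dots,B_n$ and $C$ be subspaces of a finite-dimensional vector space $W$ over a finite field and let $\alpha\subseteq\{1,\dots,n\}$. Then there exists a subspace $A$ of $W$ with $H(A)=H(C\mid B_j:j\in\alpha)$ and $H(T_A(C)\mid T_A(B_j):j\in\alpha)=0$. (ii) Let $\{B^i_1,\dots,B^i_n,C^i\}_{i=1}^\infty$ be a sequence of collections of subspaces (for each $i$, of a finite-dimensional vector space $W^i$ over a finite field), let $\alpha\subseteq\{1,\dots,n\}$, and let $k(i)>0$ satisfy $\lim_{i\to\infty}\frac{1}{k(i)}H(C^i\mid B^i_j:j\in\alpha)=0$. Then there exist subspaces $A^i$ of $W^i$ such that for every $i$, $H(A^i)=H(C^i\mid B^i_j:j\in\alpha)$ and $H(T_{A^i}(C^i)\mid T_{A^i}(B^i_j):j\in\alpha)=0$, and for all $\beta\subseteq\{1,\dots,n\}$, $\lim_{i\to\infty}\frac{1}{k(i)}H(T_{A^i}(B^i_j):j\in\beta)=\lim_{i\to\infty}\frac{1}{k(i)}H(B^i_j:j\in\beta)$ (in the sense that if either limit exists then both exist and are equal).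
   Context: For subspaces, $\langle\cdots\rangle$ denotes the span. $H(B_j:j\in\beta)=\dim\langle B_j:j\in\beta\rangle$ and $H(\mathcal{S}\mid\mathcal{R})=\dim\langle\mathcal{S},\mathcal{R}\rangle-\dim\langle\mathcal{R}\rangle$. For a subspace $A$ of $W$, choose any subspace $A^*$ with $\langle A,A^*\rangle=W$ and $A\cap A^*=\{0\}$; for $u=u_1+u_2$ with $u_1\in A^*,u_2\in A$ set $T_A(u)=u_1$, and $T_A(B)=\{T_A(u):u\in B\}$ for a subspace $B$. (The dimensions appearing in the statement do not depend on the choice of $A^*$.) *)

From HB Require Import structures.
From mathcomp Require Import all_boot all_order all_algebra.
Set Implicit Arguments. Unset Strict Implicit. Unset Printing Implicit Defensive.
Import GRing.Theory.
Local Open Scope ring_scope.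

Definition Hspan (K : fieldType) (vT : vectType K) (n : nat)
  (B : 'I_n -> {vspace vT}) (beta : {set 'I_n}) : nat :=
  \dim (\sum_(j in beta) B j)%VS.

Definition Hcond (K : fieldType) (vT : vectType K) (n : nat)
  (S : {vspace vT}) (B : 'I_n -> {vspace vT}) (alpha : {set 'I_n}) : nat :=
  (\dim (S + \sum_(j in alpha) B j)%VS - \dim (\sum_(j in alpha) B j)%VS)%N.

Definition is_compl (K : fieldType) (vT : vectType K) (A Astar : {vspace vT}) : Prop :=
  (A + Astar)%VS = fullv /\ (A :&: Astar)%VS = 0%VS.

(* T_A(B) = image of B under the projection u = u1 + u2 |-> u1 (u1 in Astar, u2 in A),
   i.e. the projection onto Astar along A. *)
Definition TA (K : fieldType) (vT : vectType K) (Astar A B : {vspace vT}) : {vspace vT} :=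
  (daddv_pi Astar A @: B)%VS.

(** Let S = <B_j : j in alpha> and take for A the complement C :\: S of C :&: S
    in C, so that dim A = dim (C + S) - dim S and C <= A + S.  The projection
    T_A kills A, hence T_A(C) <= T_A(A + S) = T_A(S), which is (i).  For (ii),
    T_A changes the dimension of any subspace by at most dim A, and
    dim A^i / k(i) -> 0, so the normalised dimensions have the same limits. *)

From HB Require Import structures.
From mathcomp Require Import all_boot all_order all_algebra zify.
From Stdlib Require Import Reals Lra.
Import GRing.Theory.

Set Implicit Arguments.
Unset Strict Implicit.

Section ProjectionAlongComplement.
Variables (K : fieldType) (vT : vectType K) (A Astar : {vspace vT}).
Hypothesis compl : is_compl A Astar.
Local Open Scope ring_scope.

Lemma lker_daddv_pi_compl : lker (daddv_pi Astar A) = A.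
Proof.
have [sumAAs capAAs] := compl.
have capAsA : (Astar :&: A = 0)%VS by rewrite capvC.
have decomp w : daddv_pi Astar A w + daddv_pi A Astar w = w.
  by apply: daddv_pi_add; rewrite // addvC sumAAs memvf.
apply/eqP; rewrite eqEsubv; apply/andP; split; apply/subvP => w.
  rewrite memv_ker => /eqP piw0.
  by rewrite -(decomp w) piw0 add0r memv_pi.
move=> wA; rewrite memv_ker -[X in _ == X](subrr w).
by rewrite -{2}(decomp w) (daddv_pi_id capAAs wA) addrK.
Qed.

Lemma TA_addv_compl U : TA Astar A (A + U) = TA Astar A U.
Proof.
have killA : (daddv_pi Astar A @: A = 0)%VS.
  by apply/eqP; rewrite -lkerE lker_daddv_pi_compl.
by rewrite /TA limgD killA add0v.
Qed.

Lemma dimv_TA_le U : (\dim (TA Astar A U) <= \dim U)%nat.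
Proof. by rewrite /TA -(limg_ker_dim (daddv_pi Astar A) U) leq_addl. Qed.

Lemma dimv_le_TA U : (\dim U <= \dim (TA Astar A U) + \dim A)%nat.
Proof.
rewrite /TA -{1}(limg_ker_dim (daddv_pi Astar A) U) lker_daddv_pi_compl addnC.
by rewrite leq_add2l dimvS ?capvSr.
Qed.

End ProjectionAlongComplement.

Section ConditionalDimension.
Variables (K : fieldType) (vT : vectType K) (n : nat).
Variables (B : 'I_n -> {vspace vT}) (C : {vspace vT}) (alpha : {set 'I_n}).

Lemma TA_sumv (Astar A : {vspace vT}) (beta : {set 'I_n}) :
  (\sum_(j in beta) TA Astar A (B j))%VS = TA Astar A (\sum_(j in beta) B j).
Proof. by rewrite /TA limg_sum. Qed.

Lemma dimv_diff_sumv : \dim (C :\: \sum_(j in alpha) B j) = Hcond C B alpha.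
Proof.
rewrite /Hcond.
have := dimv_cap_compl C (\sum_(j in alpha) B j).
have := dimv_sum_cap C (\sum_(j in alpha) B j).
lia.
Qed.

Lemma Hcond_TA_eq0 (A Astar : {vspace vT}) : is_compl A Astar ->
  (C <= A + \sum_(j in alpha) B j)%VS ->
  Hcond (TA Astar A C) (fun j => TA Astar A (B j)) alpha = 0%nat.
Proof.
move=> compl sCAS; rewrite /Hcond TA_sumv.
suff -> : (TA Astar A C + TA Astar A (\sum_(j in alpha) B j))%VS
          = TA Astar A (\sum_(j in alpha) B j) by rewrite subnn.
apply/eqP; rewrite eqEsubv addvSr andbT subv_add subvv andbT.
have sTA : (TA Astar A C <= TA Astar A (A + \sum_(j in alpha) B j))%VS.
  exact: limgS.
by rewrite (TA_addv_compl compl) in sTA.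
Qed.

Lemma Hcond_TA_diff_eq0 (Astar : {vspace vT}) :
  let A := (C :\: \sum_(j in alpha) B j)%VS in is_compl A Astar ->
  Hcond (TA Astar A C) (fun j => TA Astar A (B j)) alpha = 0%nat.
Proof.
move=> A compl; apply: Hcond_TA_eq0 compl _.
by rewrite -{1}(addv_diff_cap C (\sum_(j in alpha) B j)) addvS ?capvSr.
Qed.

End ConditionalDimension.

Lemma Un_cv_dominated (u h : nat -> R) :
  Un_cv h 0%R -> (forall i, Rabs (u i) <= h i)%R -> Un_cv u 0%R.
Proof.
move=> cvh le_uh eps eps_gt0; have [N hN] := cvh eps eps_gt0.
exists N => m /hN; rewrite /Rdist !Rminus_0_r.
have := le_uh m; have := Rle_abs (h m); lra.
Qed.

Lemma Un_cv_perturb (u v h : nat -> R) (l : R) : Un_cv h 0%R ->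
  (forall i, Rabs (u i - v i) <= h i)%R -> (Un_cv u l <-> Un_cv v l).
Proof.
move=> cvh le_uvh.
have cvuv : Un_cv (fun i => u i - v i)%R 0%R := Un_cv_dominated cvh le_uvh.
split => cv.
  apply: (Un_cv_ext (fun i => u i - (u i - v i))%R); first by move=> i; ring.
  by rewrite -(Rminus_0_r l); apply: CV_minus.
apply: (Un_cv_ext (fun i => v i + (u i - v i))%R); first by move=> i; ring.
by rewrite -(Rplus_0_r l); apply: CV_plus.
Qed.

Lemma Rabs_INR_div_le (x y d : nat) (k : R) : (0 < k)%R ->
  (x <= y)%nat -> (y <= x + d)%nat -> (Rabs (INR x / k - INR y / k) <= INR d / k)%R.
Proof.
move=> k_gt0 /leP le_xy /leP le_yxd.
have := le_INR _ _ le_xy; have := le_INR _ _ le_yxd; rewrite plus_INR.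
have : (0 < / k)%R by apply: Rinv_0_lt_compat.
rewrite /Rdiv => ? ? ?; apply: Rabs_le; split; nra.
Qed.

Theorem lemma4 :
  (* (i) *)
  (forall (F : finFieldType) (W : vectType F) (n : nat)
          (B : 'I_n -> {vspace W}) (C : {vspace W}) (alpha : {set 'I_n}),
   exists A : {vspace W},
     \dim A = Hcond C B alpha /\
     (forall Astar : {vspace W}, is_compl A Astar ->
        Hcond (TA Astar A C) (fun j => TA Astar A (B j)) alpha = 0%N))
  /\
  (* (ii) *)
  (forall (n : nat) (alpha : {set 'I_n})
          (F : nat -> finFieldType) (W : forall i, vectType (F i))
          (B : forall i, 'I_n -> {vspace W i}) (C : forall i, {vspace W i})
          (k : nat -> R),
   (forall i, (0 < k i)%R) ->
   Un_cv (fun i => (INR (Hcond (C i) (B i) alpha) / k i)%R) 0%R ->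
   exists A : forall i, {vspace W i},
     (forall i, \dim (A i) = Hcond (C i) (B i) alpha) /\
     (forall Astar : forall i, {vspace W i}, (forall i, is_compl (A i) (Astar i)) ->
        (forall i, Hcond (TA (Astar i) (A i) (C i))
                         (fun j => TA (Astar i) (A i) (B i j)) alpha = 0%N) /\
        (forall (beta : {set 'I_n}) (l : R),
           Un_cv (fun i => (INR (Hspan (fun j => TA (Astar i) (A i) (B i j)) beta) / k i)%R) l
           <-> Un_cv (fun i => (INR (Hspan (B i) beta) / k i)%R) l))).
Proof.
split.
  move=> F W n B C alpha; exists (C :\: \sum_(j in alpha) B j)%VS.
  by split; [exact: dimv_diff_sumv | exact: Hcond_TA_diff_eq0].
move=> n alpha F W B C k k_gt0 cv_dimA.
exists (fun i => C i :\: \sum_(j in alpha) B i j)%VS; split => [i | Astar compl].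
  exact: dimv_diff_sumv.
split => [i | beta l]; first exact: Hcond_TA_diff_eq0.
apply: (Un_cv_perturb _ cv_dimA) => i; rewrite /Hspan TA_sumv.
apply: Rabs_INR_div_le (k_gt0 i) (dimv_TA_le _ _ _) _.
by rewrite -dimv_diff_sumv; apply: dimv_le_TA.
Qed.
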